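(* Let $p\ge2$ and let $(V_i)_{i\ge1}$ and $F_n^{(r)}$ be as in the context. For every $m\in\{0,1,\ldots,p-1\}$ and $n\in\mathbb N$, \[ \mathcal H^{p,m}_n := \det_{0 \leq i,j \leq n} F_{q_{i+m} + j}^{(r_{i+m})} = \prod_{i=0}^n \prod_{j=1}^{ip+m} V_j , \] where for $k\in\mathbb N$, $q_k=\lfloor k/(p-1)\rfloor$ and $r_k=k-(p-1)q_k$ are the quotient and remainder of the Euclidean division of $k$ by $p-1$.
   Context: Fix an integer $p\ge 2$. A $p$-constellation is a planar map (proper embedding of a connected graph in the sphere, up to orientation-preserving homeomorphism) whose faces are colored black or white so that adjacent faces have opposite colors, every black face has degree $p$ and every white face has degree a multiple of $p$. Edges are oriented with the white face on their right. Rooted means one edge (root edge) is distinguished; pointed means a vertex (pointed vertex) is distinguished. In a pointed constellation a vertex has type $j$ if $j$ is the minimal length of an oriented path from it to the pointed vertex; an edge has type $j\to j'$ if its origin and endpoint have types $j,j'$. Let $(x_k)_{k\ge1}$ be formal variables, a white face of degree $kp$ having weight $x_k$, and a constellation weighted by the product of its white face weights. For $i\ge1$, $V_i$ is $1$ plus the generating function of pointed rooted $p$-constellations whose root edge is of type $j\to j-1$ for some $j\le i$. A $p$-path is a lattice path in $\mathbb Z\times\mathbb N$ with rises $(1,p-1)$ and falls $(1,-1)$; its weight is the product over its falls of $V_i$, $i$ being the starting height of the fall. For $n,r\ge0$, $F_n^{(r)}$ is the sum of the weights of all $p$-paths from $(-r,r)$ to $(np,0)$. *)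

From mathcomp Require Import all_boot all_algebra.
Set Implicit Arguments. Unset Strict Implicit. Unset Printing Implicit Defensive.
Import GRing.Theory.
Local Open Scope ring_scope.

(* A p-path is encoded by its sequence of steps: true = rise (1,p-1),
   false = fall (1,-1).  [ppath_weight p V h s] is the weight of the path
   starting at height h with steps s if it stays in Z x N and ends at
   height 0, and 0 otherwise. *)
Fixpoint ppath_weight (R : comRingType) (p : nat) (V : nat -> R)
    (h : nat) (s : seq bool) : R :=
  match s with
  | [::] => (h == 0%N)%:R
  | true :: s' => ppath_weight p V (h + (p - 1))%N s'
  | false :: s' => if h is h'.+1 then V h * ppath_weight p V h' s' else 0
  end.

(* F_n^{(r)}: sum of weights of p-paths from (-r, r) to (n p, 0);
   such paths have exactly n p + r steps. *)
Definition Fpath (R : comRingType) (p : nat) (V : nat -> R) (n r : nat) : R :=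
  \sum_(s : (n * p + r).-tuple bool) ppath_weight p V r s.

Definition qk (p k : nat) : nat := k %/ (p - 1).
Definition rk (p k : nat) : nat := k %% (p - 1).

From mathcomp Require Import all_boot all_algebra.
From mathcomp Require Import zify.
Import GRing.Theory.
Local Open Scope ring_scope.

(* Write p = d + 1 and let [walk L a b] be the total weight of the L-step
   p-paths from height a to height b.  Every path counted by
   F_{q_{i+m}+j}^{(r_{i+m})} passes, after its first i + q_{i+m} steps, through
   a height t p + m with t <= i, and reaches height i p + m only by rising all
   the time.  Cutting there factors the Hankel matrix as A B with A unitriangular
   (A_{it} = walks from r_{i+m} to t p + m) and B triangular (B_{tj} = walks from
   t p + m down to 0 in j p + m steps), whose diagonal consists of the paths that
   fall all the time, of weight V_1 ... V_{tp+m}. *)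

Lemma sum_tupleS (R : nmodType) (T : finType) L (f : L.+1.-tuple T -> R) :
  \sum_(s : L.+1.-tuple T) f s = \sum_(x : T) \sum_(s : L.-tuple T) f [tuple of x :: s].
Proof.
rewrite pair_big /= (reindex (fun x : T * L.-tuple T => [tuple of x.1 :: x.2])) //=.
exists (fun s : L.+1.-tuple T => (thead s, [tuple of behead s])).
  by move=> [x s] _; congr pair; apply: val_inj.
by move=> s _; rewrite [RHS]tuple_eta.
Qed.

Section Walks.
Variables (R : comRingType) (d : nat) (V : nat -> R).

Fixpoint walk (L a b : nat) : R :=
  match L with
  | 0 => (a == b)%:R
  | L'.+1 => walk L' (a + d) b + (if a is a'.+1 then V a * walk L' a' b else 0)
  end.

Lemma sum_ppath_weight L h :
  \sum_(s : L.-tuple bool) ppath_weight d.+1 V h s = walk L h 0.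
Proof.
elim: L h => [|L IH] h.
  rewrite (eq_bigl (fun s => s == [tuple])); last by move=> s; rewrite tuple0 eqxx.
  by rewrite big_pred1_eq.
rewrite sum_tupleS big_bool /= subSS subn0 IH; congr (_ + _).
case: h => [|h]; first by rewrite big1.
by rewrite -big_distrr /= IH.
Qed.

Lemma walk_above L a b : (a + d * L < b)%N -> walk L a b = 0.
Proof.
elim: L a => [|L IH] a /=; first by rewrite muln0 addn0 => /ltn_eqF ->.
rewrite mulnS => h; rewrite IH; last by lia.
by case: a h => [|a] h; rewrite ?IH ?mulr0 ?addr0 //; lia.
Qed.

Lemma walk_below L a b : (b + L < a)%N -> walk L a b = 0.
Proof.
elim: L a => [|L IH] a /=; first by rewrite addn0 => /gtn_eqF ->.
move=> h; rewrite IH; last by lia.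
by case: a h => [|a] h; rewrite ?IH ?mulr0 ?addr0 //; lia.
Qed.

Lemma walk_rises L a : walk L a (a + d * L) = 1.
Proof.
elim: L a => [|L IH] a /=; first by rewrite muln0 addn0 eqxx.
have -> : (a + d * L.+1 = a + d + d * L)%N by rewrite mulnS addnA.
rewrite IH.
by case: a => [|a]; rewrite ?walk_above ?mulr0 ?addr0 //; lia.
Qed.

Lemma walk_falls h : walk h h 0 = \prod_(1 <= l < h.+1) V l.
Proof.
elim: h => [|h IH] /=; first by rewrite big_geq.
by rewrite walk_below ?add0r ?IH ?[RHS]big_nat_recr 1?mulrC //; lia.
Qed.

(* Each step changes the height by -1 mod p, so after L1 steps from a the
   height is congruent to a - L1; the bound T covers every reachable height. *)
Lemma walk_cat m T L2 c : (m < d.+1)%N -> forall L1 a,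
  a = m + L1 %[mod d.+1] -> (a + d * L1 < T * d.+1)%N ->
  walk (L1 + L2) a c =
    \sum_(t < T) walk L1 a (t * d.+1 + m) * walk L2 (t * d.+1 + m) c.
Proof.
move=> hm; elim=> [|L1 IH] a.
  rewrite addn0 muln0 addn0 /= => ha hb.
  have ea : a = (a %/ d.+1 * d.+1 + m)%N.
    by rewrite {1}(divn_eq a d.+1) ha (modn_small hm).
  have ht : (a %/ d.+1 < T)%N by rewrite -(ltn_pmul2r (ltn0Sn d)); lia.
  rewrite (bigD1 (Ordinal ht)) //= -ea eqxx mul1r big1 ?addr0 // => t /eqP ne.
  case: eqP => [e|]; last by rewrite mul0r.
  by case: ne; apply: val_inj; rewrite /= e divnMDl // divn_small // addn0.
rewrite mulnS addSn /= => ha hb.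
have ha' : (a + d = m + L1 %[mod d.+1])%N.
  rewrite -modnDml ha modnDml.
  have -> : (m + L1.+1 + d = m + L1 + d.+1)%N by lia.
  by rewrite modnDr.
rewrite (IH (a + d)) //; last by lia.
case: a ha ha' hb => [|a] ha _ hb.
  by rewrite addr0; apply: eq_bigr => t _; rewrite addr0.
rewrite (IH a); first last.
- by lia.
- by apply/eqP; rewrite -(eqn_modDr 1) !addn1 -addnS; apply/eqP.
rewrite big_distrr -big_split /=; apply: eq_bigr => t _.
by rewrite mulrDl mulrA.
Qed.

End Walks.

Arguments walk {R} d V L a b.

Section HankelFactorisation.
Variables (R : comRingType) (d : nat) (V : nat -> R) (m n : nat).

Definition first_leg : 'M[R]_n.+1 :=
  \matrix_(i, t) walk d V (i + (i + m) %/ d) ((i + m) %% d) (t * d.+1 + m).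

Definition last_leg : 'M[R]_n.+1 :=
  \matrix_(t, j) walk d V (j * d.+1 + m) (t * d.+1 + m) 0.

Lemma first_leg_top i : ((i + m) %% d + d * (i + (i + m) %/ d) = i * d.+1 + m)%N.
Proof. by have := divn_eq (i + m) d; lia. Qed.

Lemma Fpath_hankel_factor : (m < d.+1)%N ->
  \matrix_(i < n.+1, j < n.+1) Fpath d.+1 V (qk d.+1 (i + m) + j) (rk d.+1 (i + m))
  = first_leg *m last_leg.
Proof.
move=> hm; apply/matrixP => i j; rewrite !mxE /Fpath /qk /rk subSS subn0 sum_ppath_weight.
have -> : (((i + m) %/ d + j) * d.+1 + (i + m) %% d =
           (i + (i + m) %/ d) + (j * d.+1 + m))%N.
  by have := divn_eq (i + m) d; lia.
rewrite (walk_cat R d V m n.+1 (j * d.+1 + m) 0 hm).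
- by apply: eq_bigr => t _; rewrite !mxE.
- have -> : (m + (i + (i + m) %/ d) = (i + m) %/ d * d.+1 + (i + m) %% d)%N.
    by have := divn_eq (i + m) d; lia.
  by rewrite modnMDl.
- have : (i.+1 * d.+1 <= n.+1 * d.+1)%N by rewrite leq_mul2r ltn_ord orbT.
  by rewrite first_leg_top; lia.
Qed.

Lemma det_first_leg : \det first_leg = 1.
Proof.
rewrite det_trig; last first.
  apply/is_trig_mxP => i t lt_it; rewrite mxE walk_above // first_leg_top.
  have : (i.+1 * d.+1 <= t * d.+1)%N by rewrite leq_mul2r lt_it orbT.
  by lia.
by rewrite big1 // => i _; rewrite mxE -first_leg_top walk_rises.
Qed.

Lemma det_last_leg :
  \det last_leg = \prod_(i < n.+1) \prod_(1 <= j < (i * d.+1 + m).+1) V j.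
Proof.
rewrite -det_tr det_trig; last first.
  apply/is_trig_mxP => i t lt_it; rewrite !mxE walk_below //.
  have : (i.+1 * d.+1 <= t * d.+1)%N by rewrite leq_mul2r lt_it orbT.
  by lia.
by apply: eq_bigr => i _; rewrite !mxE walk_falls.
Qed.

End HankelFactorisation.

Theorem theorem3 (R : comRingType) (p : nat) (V : nat -> R)
    (hp : (2 <= p)%N) (m n : nat) (hm : (m < p)%N) :
  \det (\matrix_(i < n.+1, j < n.+1)
          Fpath p V (qk p (i + m) + j)%N (rk p (i + m)))
  = \prod_(i < n.+1) \prod_(1 <= j < (i * p + m).+1) V j.
Proof.
(* The identity also holds for p = 1. *)
case: p hp hm => [//|d] _ hm.
by rewrite Fpath_hankel_factor // det_mulmx det_first_leg det_last_leg mul1r.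
Qed.
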